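(* Let $n>1$ be a prime power pseudoperfect number such that $n-1$ is prime. Then $n(n-1)$ is a prime power Giuga number.
   Context: A prime power pseudoperfect number is an integer $n>1$ satisfying $\sum_{p^k\mid n}\frac{1}{p^k}+\frac1n=1$, where the sum ranges over all prime powers $p^k$ ($p$ prime, $k\ge1$) dividing $n$. A prime power Giuga number is a composite positive integer $m$ such that $\sum_{p^k\mid m}\frac{1}{p^k}-\frac1m$ is a positive integer, the sum again over all prime powers $p^k$ ($k\ge1$) dividing $m$. *)

From mathcomp Require Import all_boot all_order all_algebra.
Set Implicit Arguments. Unset Strict Implicit. Unset Printing Implicit Defensive.
Import Order.TTheory GRing.Theory Num.Theory.

(* d is a prime power p^k with p prime and k >= 1 (witnesses bounded by d,
   which is no restriction since p <= d and k <= d). *)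
Definition prime_power (d : nat) : bool :=
  [exists p : 'I_d.+1, prime p &&
     [exists k : 'I_d.+1, (0 < (k : nat))%N && (d == (p : nat) ^ (k : nat))]].

Definition pp_recip_sum (n : nat) : rat :=
  (\sum_(d <- divisors n | prime_power d) (d%:R)^-1)%R.

Definition pp_pseudoperfect (n : nat) : Prop :=
  (1 < n)%N /\ (pp_recip_sum n + (n%:R)^-1 = 1)%R.

Definition pp_giuga (m : nat) : Prop :=
  (1 < m)%N /\ ~~ prime m /\
  exists k : nat, (0 < k)%N /\ (pp_recip_sum m - (m%:R)^-1 = (k%:R : rat))%R.

(** If [n] is prime-power pseudoperfect and [p = n - 1] is prime, then [p] is
    coprime to [n] and [p^2] does not divide [n p], so the prime powers dividing
    [n p] are those dividing [n] together with [p] itself.  Hence the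
    reciprocal sum for [n p] is [(1 - 1/n) + 1/p], and subtracting [1/(n p)]
    leaves [1 + (n - p - 1)/(n p) = 1]. *)
From mathcomp Require Import all_boot all_order all_algebra.
From mathcomp Require Import zify ring.
Import Order.TTheory GRing.Theory Num.Theory.

Lemma prime_powerP d :
  reflect (exists p k, [/\ prime p, 0 < k & d = p ^ k]) (prime_power d).
Proof.
apply: (iffP existsP) => [[p /andP [pr /existsP [k /andP [k0 /eqP ->]]]]|].
  by exists p, k.
move=> [p [k [pr k0 ->]]].
have ltpd : p < (p ^ k).+1 by rewrite ltnS -{1}(expn1 p) leq_exp2l // prime_gt1.
have ltkd : k < (p ^ k).+1 by rewrite ltnS; apply/ltnW/ltn_expl/prime_gt1.
exists (Ordinal ltpd); rewrite /= pr; apply/existsP.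
by exists (Ordinal ltkd); rewrite /= k0 eqxx.
Qed.

Lemma prime_power_prime p : prime p -> prime_power p.
Proof. by move=> pr; apply/prime_powerP; exists p, 1; rewrite expn1. Qed.

Lemma prime_power_dvd_mul_prime n p d : prime p -> ~~ (p %| n) ->
  (d %| n * p) && prime_power d = (d == p) || (d %| n) && prime_power d.
Proof.
move=> pr pNn; have [->|dNp] := eqVneq d p.
  by rewrite dvdn_mull ?prime_power_prime.
apply/andP/andP => [] [dvd_d /[dup] pp_d /prime_powerP [q [k [qr k0 dE]]]];
  split=> //; last exact: dvdn_mulr.
have [qp|qNp] := eqVneq q p.
  rewrite qp in dE; suff k1 : k = 1 by rewrite dE k1 expn1 eqxx in dNp.
  have : p ^ k %| p ^ 1 * n by rewrite -dE expn1 mulnC.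
  rewrite Gauss_dvdl ?coprimeXl ?prime_coprime // dvdn_Pexp2l ?prime_gt1 //.
  by move=> k_le1; apply/anti_leq; rewrite k_le1 k0.
have cop : coprime d p by rewrite dE coprimeXl // prime_coprime // dvdn_prime2 ?qNp.
by rewrite -(Gauss_dvdl n cop).
Qed.

Lemma pp_recip_sum_mul_prime n p : 0 < n -> prime p -> ~~ (p %| n) ->
  pp_recip_sum (n * p) = (pp_recip_sum n + p%:R^-1)%R.
Proof.
move=> n0 pr pNn; have np0 : 0 < n * p by rewrite muln_gt0 n0 prime_gt0.
have divs : perm_eq [seq d <- divisors (n * p) | prime_power d]
                   (p :: [seq d <- divisors n | prime_power d]).
  apply: uniq_perm; rewrite /= ?filter_uniq ?divisors_uniq //.
    by rewrite andbT mem_filter -dvdn_divisors // (negPf pNn) andbF.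
  move=> d; rewrite in_cons !mem_filter -!dvdn_divisors //.
  by rewrite andbC prime_power_dvd_mul_prime // andbC.
by rewrite /pp_recip_sum -[LHS]big_filter (perm_big _ divs) big_cons big_filter addrC.
Qed.

Theorem proposition5 (n : nat) :
  pp_pseudoperfect n -> prime n.-1 -> pp_giuga (n * n.-1).
Proof.
move=> [n_gt1 pseudo] pr; set p := n.-1 in pr *.
have nE : n = p.+1 by rewrite /p; lia.
have p_gt1 := prime_gt1 pr.
have pNn : ~~ (p %| n) by rewrite nE -prime_coprime // coprimenS.
split; first by rewrite nE; nia.
split.
  by apply/negP => /primeP [_ /(_ n (dvdn_mulr _ (dvdnn n)))]; rewrite nE; lia.
exists 1; split => //.
rewrite pp_recip_sum_mul_prime ?(ltnW n_gt1) //.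
have -> : pp_recip_sum n = (1 - n%:R^-1)%R.
  by apply/eqP; rewrite eq_sym subr_eq pseudo.
rewrite nE natrM -addn1 natrD.
have p0 : (p%:R : rat) != 0%R by rewrite pnatr_eq0; lia.
have p1 : (p%:R + 1 : rat) != 0%R by rewrite natr1 pnatr_eq0.
by field; rewrite p0 p1.
Qed.
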